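(* Take a Moore-Penrose dagger category $(\mathbb{X}, \dagger)$ with a \dag-positive map $\begin{bmatrix} \alpha & \beta \\ \beta^\dagger & \delta \end{bmatrix}$ such that $\alpha$ is an isomorphism. Then $\beta^\dagger \circ \alpha^{-1}$ is its unique conditional generator. Therefore, for every object $X \in \mathbb{X}$, if $F= \left( \begin{bmatrix} f \\ g \end{bmatrix}, \begin{bmatrix} \alpha & \beta \\ \beta^\dagger & \delta \end{bmatrix}, \begin{bmatrix} s \\ t \end{bmatrix} \right)$ is a map in $\mathfrak{G}\left[ (\mathbb{X}, \dagger) \right]_X$, then $F\vert_B = \left( \begin{bmatrix} \beta^\dagger \circ \alpha^\circ & g - \beta^\dagger \circ \alpha^\circ \circ f \end{bmatrix}, \delta - \beta^\dagger \circ \alpha^\circ \circ \beta, t - \beta^\dagger \circ \alpha^\circ \circ s \right)$ is its unique conditional.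
   Context: Here $(\mathbb{X}, \dagger)$ is a dagger additive category (a dagger category enriched in abelian groups with additive dagger and finite biproducts satisfying $\pi_j^\dagger = \iota_j$; maps between biproducts are written as matrices, the dagger acting as conjugate transpose) in which every map $f$ has a Moore-Penrose inverse $f^\circ$, i.e. $f \circ f^\circ \circ f = f$, $f^\circ \circ f \circ f^\circ = f^\circ$, $(f \circ f^\circ)^\dagger = f \circ f^\circ$, $(f^\circ \circ f)^\dagger = f^\circ \circ f$. A map $p$ is $\dagger$-positive if $p = \phi^\dagger \circ \phi$ for some $\phi$. The map $\begin{bmatrix} \alpha & \beta \\ \beta^\dagger & \delta \end{bmatrix}: B \oplus C \to B \oplus C$ has $\alpha: B \to B$, $\beta: C \to B$, $\delta: C \to C$. A conditional generator for it is a map $m: B \to C$ with $m \circ \alpha = \beta^\dagger$ and $\delta - m \circ \beta$ $\dagger$-positive. For an object $X$, the Gauss construction $\mathfrak{G}\left[ (\mathbb{X}, \dagger) \right]_X$ is the Markov category with the objects of $\mathbb{X}$, maps $A \to B$ the triples $(f,p,x)$ with $f: A \to B$, $p: B \to B$ $\dagger$-positive, $x: X \to B$; identities $\mathsf{Id}_A = (\mathsf{id}_A,0,0)$; composition $(g,q,y) \circ (f,p,x) = (g \circ f, q + g \circ p \circ g^\dagger, y + g \circ x)$; $A \otimes B = A \oplus B$, $(f,p,x) \otimes (g,q,y) = \left(f \oplus g, p \oplus q, \begin{bmatrix} x \\ y \end{bmatrix}\right)$; copy $\mathsf{copy}_A = \left(\begin{bmatrix} \mathsf{id}_A \\ \mathsf{id}_A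 \end{bmatrix}, 0, 0\right)$, delete $\mathsf{del}_A = (0,0,0): A \to \mathsf{0}$. In $F: A \to B \otimes C$, $f: A \to B$, $g: A \to C$, $s: X \to B$, $t: X \to C$. A map $G: B \otimes A \to C$ is a conditional of $F$ if $(\mathsf{Id}_B \otimes G) \circ (\mathsf{copy}_B \otimes \mathsf{Id}_A) \circ (\mathsf{Id}_B \otimes \mathsf{del}_C \otimes \mathsf{Id}_A) \circ (F \otimes \mathsf{Id}_A) \circ \mathsf{copy}_A = F$. *)

From HB Require Import structures.
From mathcomp Require Import all_boot all_algebra.
Set Implicit Arguments. Unset Strict Implicit. Unset Printing Implicit Defensive.
Import GRing.Theory.
Local Open Scope ring_scope.

Record MPDagCat := {
  Ob : Type;
  Hm : Ob -> Ob -> zmodType;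
  idm : forall A, Hm A A;
  comp : forall A B C, Hm B C -> Hm A B -> Hm A C;
  compA : forall A B C D (h : Hm C D) (g : Hm B C) (f : Hm A B),
      comp h (comp g f) = comp (comp h g) f;
  comp1m : forall A B (f : Hm A B), comp (idm B) f = f;
  compm1 : forall A B (f : Hm A B), comp f (idm A) = f;
  compDl : forall A B C (g1 g2 : Hm B C) (f : Hm A B),
      comp (g1 + g2) f = comp g1 f + comp g2 f;
  compDr : forall A B C (g : Hm B C) (f1 f2 : Hm A B),
      comp g (f1 + f2) = comp g f1 + comp g f2;
  dag : forall A B, Hm A B -> Hm B A;
  dagK : forall A B (f : Hm A B), dag (dag f) = f;
  dag_id : forall A, dag (idm A) = idm A;
  dag_comp : forall A B C (g : Hm B C) (f : Hm A B),
      dag (comp g f) = comp (dag f) (dag g);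
  dagD : forall A B (f g : Hm A B), dag (f + g) = dag f + dag g;
  zo : Ob;
  zo_id : idm zo = 0;
  bp : Ob -> Ob -> Ob;
  p1 : forall A B, Hm (bp A B) A;
  p2 : forall A B, Hm (bp A B) B;
  i1 : forall A B, Hm A (bp A B);
  i2 : forall A B, Hm B (bp A B);
  p1i1 : forall A B, comp (p1 A B) (i1 A B) = idm A;
  p2i2 : forall A B, comp (p2 A B) (i2 A B) = idm B;
  p1i2 : forall A B, comp (p1 A B) (i2 A B) = 0;
  p2i1 : forall A B, comp (p2 A B) (i1 A B) = 0;
  bp_id : forall A B,
      comp (i1 A B) (p1 A B) + comp (i2 A B) (p2 A B) = idm (bp A B);
  dag_p1 : forall A B, dag (p1 A B) = i1 A B;
  dag_p2 : forall A B, dag (p2 A B) = i2 A B;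
  mp : forall A B, Hm A B -> Hm B A;
  mp1 : forall A B (f : Hm A B), comp f (comp (mp f) f) = f;
  mp2 : forall A B (f : Hm A B), comp (mp f) (comp f (mp f)) = mp f;
  mp3 : forall A B (f : Hm A B), dag (comp f (mp f)) = comp f (mp f);
  mp4 : forall A B (f : Hm A B), dag (comp (mp f) f) = comp (mp f) f
}.

Arguments Hm {m}.
Arguments idm {m}.
Arguments comp {m A B C}.
Arguments dag {m A B}.
Arguments zo {m}.
Arguments bp {m}.
Arguments p1 {m}.
Arguments p2 {m}.
Arguments i1 {m}.
Arguments i2 {m}.
Arguments mp {m A B}.

Notation "g \oc f" := (comp g f) (at level 40, left associativity).
Notation "f ^+dag" := (dag f) (at level 2, format "f ^+dag").
Notation "f ^+mp" := (mp f) (at level 2, format "f ^+mp").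

Section Matrices.
Variable X : MPDagCat.

Definition col2 {A B C : Ob X} (f : Hm A B) (g : Hm A C) : Hm A (bp B C) :=
  i1 B C \oc f + i2 B C \oc g.
Definition row2 {B C D : Ob X} (h : Hm B D) (k : Hm C D) : Hm (bp B C) D :=
  h \oc p1 B C + k \oc p2 B C.
(* 2x2 matrix [[a, b], [c, d]] : B (+) C -> B' (+) C' *)
Definition mx22 {B C B' C' : Ob X} (a : Hm B B') (b : Hm C B')
    (c : Hm B C') (d : Hm C C') : Hm (bp B C) (bp B' C') :=
  i1 B' C' \oc a \oc p1 B C + i1 B' C' \oc b \oc p2 B C
  + i2 B' C' \oc c \oc p1 B C + i2 B' C' \oc d \oc p2 B C.
Definition dsum {A A' B B' : Ob X} (f : Hm A B) (g : Hm A' B') :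
    Hm (bp A A') (bp B B') :=
  i1 B B' \oc f \oc p1 A A' + i2 B B' \oc g \oc p2 A A'.

Definition dag_positive {A : Ob X} (p : Hm A A) : Prop :=
  exists (Y : Ob X) (phi : Hm A Y), p = phi^+dag \oc phi.

Definition is_iso {A B : Ob X} (f : Hm A B) : Prop :=
  exists g : Hm B A, g \oc f = idm A /\ f \oc g = idm B.

Definition cond_generator {B C : Ob X} (alpha : Hm B B) (beta : Hm C B)
    (delta : Hm C C) (m : Hm B C) : Prop :=
  m \oc alpha = beta^+dag /\ dag_positive (delta - m \oc beta).

Variable Xo : Ob X.

Record GMap (A B : Ob X) := GM { gf : Hm A B; gp : Hm B B; gx : Hm Xo B }.

Definition gauss_map {A B : Ob X} (F : GMap A B) : Prop := dag_positive (gp F).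

Definition Gid (A : Ob X) : GMap A A := GM (idm A) 0 0.
Definition Gcomp {A B C : Ob X} (G : GMap B C) (F : GMap A B) : GMap A C :=
  GM (gf G \oc gf F) (gp G + gf G \oc gp F \oc (gf G)^+dag) (gx G + gf G \oc gx F).
Definition Gtens {A B A' B' : Ob X} (F : GMap A B) (G : GMap A' B') :
    GMap (bp A A') (bp B B') :=
  GM (dsum (gf F) (gf G)) (dsum (gp F) (gp G)) (col2 (gx F) (gx G)).
Definition Gcopy (A : Ob X) : GMap A (bp A A) := GM (col2 (idm A) (idm A)) 0 0.
Definition Gdel (A : Ob X) : GMap A zo := GM 0 0 0.
Definition assocm (A B C : Ob X) : Hm (bp (bp A B) C) (bp A (bp B C)) :=
  i1 A (bp B C) \oc p1 A B \oc p1 (bp A B) C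
  + i2 A (bp B C) \oc i1 B C \oc p2 A B \oc p1 (bp A B) C
  + i2 A (bp B C) \oc i2 B C \oc p2 (bp A B) C.
Definition Gassoc (A B C : Ob X) : GMap (bp (bp A B) C) (bp A (bp B C)) :=
  GM (assocm A B C) 0 0.
Definition Glunit (A : Ob X) : GMap (bp zo A) A := GM (p2 zo A) 0 0.

(* G : B (x) A -> C is a conditional of F : A -> B (x) C :
   (Id_B (x) G) o (copy_B (x) Id_A) o (Id_B (x) del_C (x) Id_A) o (F (x) Id_A) o copy_A = F,
   with the associators / unitor made explicit. *)
Definition conditional {A B C : Ob X} (F : GMap A (bp B C)) (G : GMap (bp B A) C) :
    Prop :=
  Gcomp (Gtens (Gid B) G)
   (Gcomp (Gassoc B B A)
    (Gcomp (Gtens (Gcopy B) (Gid A))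
     (Gcomp (Gtens (Gid B) (Glunit A))
      (Gcomp (Gtens (Gid B) (Gtens (Gdel C) (Gid A)))
       (Gcomp (Gassoc B C A)
        (Gcomp (Gtens F (Gid A)) (Gcopy A))))))) = F.

End Matrices.

(* If the block covariance is phi^dag phi with phi = [u v], then alpha = u^dag u,
   beta = u^dag v and delta = v^dag v, so the Schur complement
   delta - beta^dag alpha^-1 beta is psi^dag psi for psi = v - u alpha^-1 beta:
   thus beta^dag alpha^-1 is a conditional generator, and m alpha = beta^dag forces
   any other one to equal it.  In the Gauss construction, feeding F through a
   candidate conditional ([h1 h2], q, y) after copying B and discarding C yields
   ([f; h1 f + h2], [[alpha, alpha h1^dag], [h1 alpha, q + h1 alpha h1^dag]],
   [s; y + h1 s]); equating this with F determines h1 = beta^dag alpha^-1 and then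
   h2, q and y.  Finally the Moore-Penrose inverse of an isomorphism is its inverse. *)

From Pilot Require Import Defs.
From mathcomp Require Import all_boot all_algebra.
Import Defs GRing.Theory.
Set Implicit Arguments. Unset Strict Implicit. Unset Printing Implicit Defensive.
Local Open Scope ring_scope.

Section AdditiveDagger.
Variable X : MPDagCat.
Implicit Types A B C D : Ob X.

Lemma comp0m A B C (f : Hm A B) : (0 : Hm B C) \oc f = 0.
Proof. by apply: (addrI ((0 : Hm B C) \oc f)); rewrite -compDl !addr0. Qed.

Lemma compm0 A B C (g : Hm B C) : g \oc (0 : Hm A B) = 0.
Proof. by apply: (addrI (g \oc (0 : Hm A B))); rewrite -compDr !addr0. Qed.

Lemma compNl A B C (g : Hm B C) (f : Hm A B) : (- g) \oc f = - (g \oc f).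
Proof. by apply: (addrI (g \oc f)); rewrite -compDl !subrr comp0m. Qed.

Lemma compNr A B C (g : Hm B C) (f : Hm A B) : g \oc (- f) = - (g \oc f).
Proof. by apply: (addrI (g \oc f)); rewrite -compDr !subrr compm0. Qed.

Lemma dag0 A B : (0 : Hm A B)^+dag = 0.
Proof. by apply: (addrI (0 : Hm A B)^+dag); rewrite -dagD !addr0. Qed.

Lemma dagN A B (f : Hm A B) : (- f)^+dag = - f^+dag.
Proof. by apply: (addrI f^+dag); rewrite -dagD !subrr dag0. Qed.

Lemma dag_i1 A B : (i1 A B)^+dag = p1 A B.
Proof. by rewrite -dag_p1 dagK. Qed.

Lemma dag_i2 A B : (i2 A B)^+dag = p2 A B.
Proof. by rewrite -dag_p2 dagK. Qed.

End AdditiveDagger.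

Section Blocks.
Variable X : MPDagCat.
Implicit Types A B C D : Ob X.

Lemma p1_col2 A B C (u : Hm C A) (v : Hm C B) : p1 A B \oc col2 u v = u.
Proof. by rewrite /col2 compDr !compA p1i1 p1i2 comp1m comp0m addr0. Qed.

Lemma p2_col2 A B C (u : Hm C A) (v : Hm C B) : p2 A B \oc col2 u v = v.
Proof. by rewrite /col2 compDr !compA p2i1 p2i2 comp1m comp0m add0r. Qed.

Lemma row2_i1 A B C (h : Hm A C) (k : Hm B C) : row2 h k \oc i1 A B = h.
Proof. by rewrite /row2 compDl -!compA p1i1 p2i1 compm1 compm0 addr0. Qed.

Lemma row2_i2 A B C (h : Hm A C) (k : Hm B C) : row2 h k \oc i2 A B = k.
Proof. by rewrite /row2 compDl -!compA p1i2 p2i2 compm1 compm0 add0r. Qed.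

Lemma col2_eta A B C (w : Hm C (bp A B)) : w = col2 (p1 A B \oc w) (p2 A B \oc w).
Proof. by rewrite /col2 !compA -compDl bp_id comp1m. Qed.

Lemma row2_eta A B C (w : Hm (bp A B) C) : w = row2 (w \oc i1 A B) (w \oc i2 A B).
Proof. by rewrite /row2 -!compA -compDr bp_id compm1. Qed.

Lemma col2_inj A B C (u u' : Hm C A) (v v' : Hm C B) :
  col2 u v = col2 u' v' -> u = u' /\ v = v'.
Proof.
by move=> e; split; [rewrite -(p1_col2 u v) e p1_col2 | rewrite -(p2_col2 u v) e p2_col2].
Qed.

Lemma row2_inj A B C (h h' : Hm A C) (k k' : Hm B C) :
  row2 h k = row2 h' k' -> h = h' /\ k = k'.
Proof.
by move=> e; split; [rewrite -(row2_i1 h k) e row2_i1 | rewrite -(row2_i2 h k) e row2_i2].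
Qed.

Lemma col2_comp A B C D (u : Hm C A) (v : Hm C B) (w : Hm D C) :
  col2 u v \oc w = col2 (u \oc w) (v \oc w).
Proof. by rewrite /col2 compDl !compA. Qed.

Lemma comp_row2 A B C D (h : Hm A C) (k : Hm B C) (w : Hm C D) :
  w \oc row2 h k = row2 (w \oc h) (w \oc k).
Proof. by rewrite /row2 compDr !compA. Qed.

Lemma row2_col2 A B C D (h : Hm A D) (k : Hm B D) (u : Hm C A) (v : Hm C B) :
  row2 h k \oc col2 u v = h \oc u + k \oc v.
Proof.
rewrite /row2 /col2 compDl !compDr -!compA !(compA (p1 A B)) !(compA (p2 A B)).
by rewrite p1i1 p1i2 p2i1 p2i2 !comp1m !comp0m !compm0 addr0 add0r.
Qed.

Lemma row2_col2_swap A B C D (a : Hm A C) (b : Hm B C) (c : Hm A D) (d : Hm B D) :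
  row2 (col2 a c) (col2 b d) = col2 (row2 a b) (row2 c d).
Proof. by rewrite (col2_eta (row2 _ _)) !comp_row2 !p1_col2 !p2_col2. Qed.

Lemma col2_add A B C (u u' : Hm C A) (v v' : Hm C B) :
  col2 u v + col2 u' v' = col2 (u + u') (v + v').
Proof. by rewrite /col2 !compDr addrACA. Qed.

Lemma row2_add A B C (h h' : Hm A C) (k k' : Hm B C) :
  row2 h k + row2 h' k' = row2 (h + h') (k + k').
Proof. by rewrite /row2 !compDl addrACA. Qed.

Lemma col2_00 A B C : col2 (0 : Hm C A) (0 : Hm C B) = 0.
Proof. by rewrite /col2 !compm0 addr0. Qed.

Lemma row2_00 A B C : row2 (0 : Hm A C) (0 : Hm B C) = 0.
Proof. by rewrite /row2 !comp0m addr0. Qed.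

Lemma row2_0col2 A B C D (b : Hm B C) (d : Hm B D) :
  row2 (0 : Hm A (bp C D)) (col2 b d) = col2 (row2 0 b) (row2 0 d).
Proof. by rewrite -row2_col2_swap col2_00. Qed.

Lemma row2_col20 A B C D (a : Hm A C) (c : Hm A D) :
  row2 (col2 a c) (0 : Hm B (bp C D)) = col2 (row2 a 0) (row2 c 0).
Proof. by rewrite -row2_col2_swap col2_00. Qed.

Lemma dag_col2 A B C (u : Hm C A) (v : Hm C B) : (col2 u v)^+dag = row2 u^+dag v^+dag.
Proof. by rewrite /col2 /row2 dagD !dag_comp dag_i1 dag_i2. Qed.

Lemma dag_row2 A B C (h : Hm A C) (k : Hm B C) : (row2 h k)^+dag = col2 h^+dag k^+dag.
Proof. by rewrite /col2 /row2 dagD !dag_comp dag_p1 dag_p2. Qed.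

Lemma mx22E A B A' B' (a : Hm A A') (b : Hm B A') (c : Hm A B') (d : Hm B B') :
  mx22 a b c d = col2 (row2 a b) (row2 c d).
Proof. by rewrite /mx22 /col2 /row2 !compDr !compA addrA. Qed.

Lemma dsumE A B A' B' (f : Hm A B) (g : Hm A' B') : dsum f g = mx22 f 0 0 g.
Proof. by rewrite /dsum /mx22 !compm0 !comp0m addr0 addr0. Qed.

Lemma dsum_col2 A B A' B' C (f : Hm A B) (g : Hm A' B') (u : Hm C A) (v : Hm C A') :
  dsum f g \oc col2 u v = col2 (f \oc u) (g \oc v).
Proof. by rewrite dsumE mx22E col2_comp !row2_col2 !comp0m addr0 add0r. Qed.

Lemma mx22_inj A B A' B' (a a' : Hm A A') (b b' : Hm B A') (c c' : Hm A B')
    (d d' : Hm B B') :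
  mx22 a b c d = mx22 a' b' c' d' -> [/\ a = a', b = b', c = c' & d = d'].
Proof. by rewrite !mx22E => /col2_inj[/row2_inj[-> ->] /row2_inj[-> ->]]. Qed.

Lemma dag_mx22 A B A' B' (a : Hm A A') (b : Hm B A') (c : Hm A B') (d : Hm B B') :
  (mx22 a b c d)^+dag = mx22 a^+dag c^+dag b^+dag d^+dag.
Proof. by rewrite !mx22E dag_col2 !dag_row2 row2_col2_swap. Qed.

Lemma dag_row2_row2 A B C (u : Hm A C) (v : Hm B C) :
  (row2 u v)^+dag \oc row2 u v =
  mx22 (u^+dag \oc u) (u^+dag \oc v) (v^+dag \oc u) (v^+dag \oc v).
Proof. by rewrite dag_row2 col2_comp !comp_row2 mx22E. Qed.

Lemma p1E A B : p1 A B = row2 (idm A) 0.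
Proof. by rewrite /row2 comp1m comp0m addr0. Qed.

Lemma p2E A B : p2 A B = row2 0 (idm B).
Proof. by rewrite /row2 comp1m comp0m add0r. Qed.

Lemma i1E A B : i1 A B = col2 (idm A) 0.
Proof. by rewrite /col2 compm1 compm0 addr0. Qed.

Lemma i2E A B : i2 A B = col2 0 (idm B).
Proof. by rewrite /col2 compm1 compm0 add0r. Qed.

Lemma assocmE A B C :
  assocm A B C = col2 (row2 (row2 (idm A) 0) 0)
                      (col2 (row2 (row2 0 (idm B)) 0) (row2 0 (idm C))).
Proof.
by rewrite /assocm /col2 /row2 !comp0m !comp1m !addr0 !add0r compDr !compA addrA.
Qed.

End Blocks.

Section Positivity.
Variable X : MPDagCat.
Implicit Types A B C : Ob X.

Lemma dag_positive_dag A (p : Hm A A) : dag_positive p -> p^+dag = p.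
Proof. by case=> Y [phi ->]; rewrite dag_comp dagK. Qed.

Lemma dag_positive_mx22 B C (a : Hm B B) (b : Hm C B) (c : Hm B C) (d : Hm C C) :
  dag_positive (mx22 a b c d) ->
  exists Y (u : Hm B Y) (v : Hm C Y),
    [/\ a = u^+dag \oc u, b = u^+dag \oc v, c = v^+dag \oc u & d = v^+dag \oc v].
Proof.
case=> Y [phi]; rewrite (row2_eta phi) dag_row2_row2 => /mx22_inj[-> -> -> ->].
by exists Y, (phi \oc i1 B C), (phi \oc i2 B C).
Qed.

Lemma dag_positive_schur B C (a : Hm B B) (b : Hm C B) (d : Hm C C) (ai : Hm B B) :
  dag_positive (mx22 a b b^+dag d) -> a \oc ai = idm B ->
  dag_positive (d - b^+dag \oc ai \oc b).
Proof.
case/dag_positive_mx22=> Y [u [v [-> -> _ ->]]] aK.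
exists Y, (v - u \oc ai \oc u^+dag \oc v).
have uK Z (x : Hm B Z) : x \oc u^+dag \oc u \oc ai = x.
  by rewrite -!compA (compA u^+dag) aK compm1.
rewrite !dagD !dagN !dag_comp !dagK !compDl !compDr !compNl !compNr !compA uK.
by rewrite subrr addr0.
Qed.

Lemma eq_comp_rinv A B C (m : Hm B C) (a : Hm A B) (ai : Hm B A) (n : Hm A C) :
  m \oc a = n -> a \oc ai = idm B -> m = n \oc ai.
Proof. by move=> <- aK; rewrite -compA aK compm1. Qed.

Lemma mp_inverse A B (a : Hm A B) (ai : Hm B A) :
  ai \oc a = idm A -> a \oc ai = idm B -> a^+mp = ai.
Proof.
move=> aiK aKi; have := congr1 (fun u => ai \oc u \oc ai) (mp1 a).
by rewrite !compA aiK !comp1m -compA aKi compm1.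
Qed.

Lemma cond_generator_inv B C (alpha : Hm B B) (beta : Hm C B) (delta : Hm C C)
    (ai : Hm B B) :
  dag_positive (mx22 alpha beta beta^+dag delta) ->
  ai \oc alpha = idm B -> alpha \oc ai = idm B ->
  cond_generator alpha beta delta (beta^+dag \oc ai).
Proof.
move=> pos aiK aKi; split; first by rewrite -compA aiK compm1.
exact: dag_positive_schur pos aKi.
Qed.

End Positivity.

(* Rewrites every map between biproducts into a column of rows of plain maps.
   [autorewrite] matches syntactically: ssreflect's [rewrite] would unfold [col2]
   and [row2] (which are sums) when matching [compDl] and blow the terms up.  The
   final [addr0]/[add0r] pass catches zeros whose structure instance differs
   syntactically from the one in the hint. *)
Hint Rewrite dag_col2 dag_row2 dagD dag0 dag_id dagK dag_comp
    compDl compDr comp0m compm0 comp1m compm1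
    col2_comp comp_row2 row2_col2 row2_col2_swap row2_0col2 row2_col20
    col2_00 row2_00 col2_add row2_add compA : blocks.
Ltac block_simpl :=
  rewrite ?(dsumE, mx22E, assocmE) ?(p1E, p2E, i1E, i2E);
  repeat progress (autorewrite with blocks; rewrite ?(addr0, add0r)).

Section Gauss.
Variable (X : MPDagCat) (Xo : Ob X).
Implicit Types A B C : Ob X.

Lemma Gcomp_det A B C (k : Hm B C) (F : GMap Xo A B) :
  Gcomp (GM k 0 0) F = GM (k \oc gf F) (k \oc gp F \oc k^+dag) (k \oc gx F).
Proof. by rewrite /Gcomp /= !add0r. Qed.

Lemma Gcomp_detA A B C D (k : Hm C D) (l : Hm B C) (F : GMap Xo A B) :
  Gcomp (GM k 0 0) (Gcomp (GM l 0 0) F) = Gcomp (GM (k \oc l) 0 0) F.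
Proof. by rewrite !Gcomp_det /= dag_comp !compA. Qed.

Lemma Gtens_det A B A' B' (f : Hm A B) (g : Hm A' B') :
  Gtens (GM f 0 0 : GMap Xo A B) (GM g 0 0 : GMap Xo A' B') = GM (dsum f g) 0 0.
Proof. by rewrite /Gtens /= /dsum !compm0 !comp0m addr0 col2_00. Qed.

Lemma Gcomp_Gtens_Gcopy A B (F : GMap Xo A B) :
  Gcomp (Gtens F (Gid Xo A)) (Gcopy Xo A) =
  GM (col2 (gf F) (idm A)) (dsum (gp F) 0) (col2 (gx F) 0).
Proof.
by rewrite /Gcomp /Gtens /= dsum_col2 !compm1 !compm0 !comp0m !addr0.
Qed.

Lemma Gcomp_discard_copy A B C (H : GMap Xo A (bp (bp B C) A)) :
  Gcomp (Gassoc Xo B B A) (Gcomp (Gtens (Gcopy Xo B) (Gid Xo A))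
   (Gcomp (Gtens (Gid Xo B) (Glunit Xo A))
    (Gcomp (Gtens (Gid Xo B) (Gtens (Gdel Xo C) (Gid Xo A)))
     (Gcomp (Gassoc Xo B C A) H)))) =
  Gcomp (GM (col2 (p1 B C \oc p1 (bp B C) A) (dsum (p1 B C) (idm A))) 0 0) H.
Proof.
by rewrite !Gtens_det !Gcomp_detA; block_simpl.
Qed.

Lemma conditional_blockE A B C (f : Hm A B) (g : Hm A C)
    (a : Hm B B) (b : Hm C B) (c : Hm B C) (d : Hm C C) (s : Hm Xo B) (t : Hm Xo C)
    (h1 : Hm B C) (h2 : Hm A C) (q : Hm C C) (y : Hm Xo C) :
  conditional (GM (col2 f g) (mx22 a b c d) (col2 s t)) (GM (row2 h1 h2) q y) <->
  [/\ h1 \oc f + h2 = g, a \oc h1^+dag = b, h1 \oc a = c,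
      q + h1 \oc a \oc h1^+dag = d & y + h1 \oc s = t].
Proof.
rewrite /conditional Gcomp_Gtens_Gcopy Gcomp_discard_copy Gcomp_det /=.
set L := Gcomp _ _.
suff -> : L = GM (col2 f (h1 \oc f + h2))
                 (mx22 a (a \oc h1^+dag) (h1 \oc a) (q + h1 \oc a \oc h1^+dag))
                 (col2 s (y + h1 \oc s)).
  split; last by case=> <- <- <- <- <-.
  by case=> /col2_inj[_ ->] /mx22_inj[_ -> -> ->] /col2_inj[_ ->].
by rewrite /L /Gcomp /Gtens /=; f_equal; block_simpl.
Qed.

End Gauss.

Theorem mainTheorem15 (X : MPDagCat) (B C : Ob X)
    (alpha : Hm B B) (beta : Hm C B) (delta : Hm C C) :
  dag_positive (mx22 alpha beta beta^+dag delta) ->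
  is_iso alpha ->
  (* beta^dag o alpha^{-1} is the unique conditional generator *)
  (forall alpha_inv : Hm B B,
     alpha_inv \oc alpha = idm B -> alpha \oc alpha_inv = idm B ->
     cond_generator alpha beta delta (beta^+dag \oc alpha_inv) /\
     (forall m : Hm B C, cond_generator alpha beta delta m ->
        m = beta^+dag \oc alpha_inv)) /\
  (* F|_B is the unique conditional of F *)
  (forall (Xo A : Ob X) (f : Hm A B) (g : Hm A C) (s : Hm Xo B) (t : Hm Xo C),
     let F : GMap Xo A (bp B C) :=
       GM (col2 f g) (mx22 alpha beta beta^+dag delta) (col2 s t) in
     let FB : GMap Xo (bp B A) C :=
       GM (row2 (beta^+dag \oc alpha^+mp) (g - beta^+dag \oc alpha^+mp \oc f))
          (delta - beta^+dag \oc alpha^+mp \oc beta)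
          (t - beta^+dag \oc alpha^+mp \oc s) in
     gauss_map FB /\ conditional F FB /\
     (forall G : GMap Xo (bp B A) C, gauss_map G -> conditional F G -> G = FB)).
Proof.
move=> pos [ai [aiK aKi]]; split.
  move=> ai' ai'K aKi'; split; first exact: cond_generator_inv.
  by move=> m [/eq_comp_rinv/(_ aKi')].
have := dag_positive_dag pos; rewrite dag_mx22 => /mx22_inj[alpha_sa _ _ _].
have gen_dag : alpha \oc (beta^+dag \oc ai)^+dag = beta.
  by rewrite dag_comp dagK compA -{1}alpha_sa -dag_comp aiK dag_id comp1m.
rewrite (mp_inverse aiK aKi) => Xo A f g s t F FB.
split; first exact: dag_positive_schur pos aKi.
split.
  apply/conditional_blockE; split.
  - by rewrite addrC subrK.
  - exact: gen_dag.
  - by rewrite -compA aiK compm1.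
  - by rewrite -[_ \oc alpha \oc _]compA gen_dag subrK.
  - by rewrite subrK.
move=> [h q y] _; rewrite [h]row2_eta => /conditional_blockE[eg eb ec ed et].
rewrite /FB -(eq_comp_rinv ec aKi); f_equal.
- by rewrite -eg addrAC subrr add0r.
- by rewrite -ed -[_ \oc alpha \oc _]compA eb addrK.
- by rewrite -et addrK.
Qed.
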